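(* Let $X$ be a topological space and $\{X_\alpha\}_{\alpha\in I}$ a family of subspaces of $X$, each of which is dense-connected. Suppose that for every non-empty open subset $U$ of $X$, either $U\cap\bigcup_{\alpha\in I}X_\alpha=\emptyset$ or $U\cap X_\alpha\neq\emptyset$ for every $\alpha\in I$. Then $\bigcup_{\alpha\in I}X_\alpha$ is dense-connected.
   Context: A space $X$ is dense-connected if every dense subset of $X$ (with the subspace topology) is connected. *)

From HB Require Import structures.
From mathcomp Require Import all_boot all_order all_algebra.
From mathcomp Require Import all_classical all_reals all_analysis.
Set Implicit Arguments. Unset Strict Implicit. Unset Printing Implicit Defensive.
Local Open Scope classical_set_scope.

Definition dense_in (T : topologicalType) (Y D : set T) : Prop :=
  D `<=` Y /\ (forall O : set T, open O -> O `&` Y !=set0 -> O `&` D !=set0).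

(* Y is dense-connected: every dense subset of Y (subspace topology) is
   connected.  [connected D] in MathComp-Analysis is connectedness of D with
   its subspace topology, which coincides with the subspace topology
   inherited from Y. *)
Definition dense_connected (T : topologicalType) (Y : set T) : Prop :=
  forall D : set T, dense_in Y D -> connected D.

From HB Require Import structures.
From mathcomp Require Import all_boot all_order all_algebra.
From mathcomp Require Import all_classical all_reals all_analysis.
Local Open Scope classical_set_scope.

(* Write Y for the union of the X a and let D be dense in Y.
   If D were disconnected, two open sets U, V would separate it: D is covered
   by U `|` V, misses U `&` V, and meets both U and V.  By density the open set
   U `&` V then misses all of Y, while U and V both meet Y; by the hypothesis
   on open sets they meet every X a.  Fix an index a: the set
   X a `&` (U `|` V) is dense in X a (any open set meeting X a meets D, hence
   meets Y inside U `|` V, hence meets X a inside U `|` V), so it is connected;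
   but U and V separate it, a contradiction. *)

Section OpenSeparation.
Context {T : topologicalType}.
Implicit Types A U V O W X Y D : set T.

Definition separation A U V :=
  [/\ A `<=` U `|` V, A `&` U `&` V = set0, A `&` U !=set0 & A `&` V !=set0].

Lemma connected_open_separation A :
  connected A <-> forall U V, open U -> open V -> ~ separation A U V.
Proof.
split=> [Acon U V oU oV [AUV AUV0 [u [Au Uu]] [v [Av Vv]]]|noSep].
  have AUclosed : A `&` U = A `&` ~` V.
    apply/seteqP; split=> x [Ax Ux]; split=> //.
      by move=> Vx; have : (A `&` U `&` V) x by []; rewrite AUV0.
    by case: (AUV x Ax) => // /Ux.
  have AUA : A `&` U = A.
    apply: Acon; first by exists u.
      by exists U.
    by exists (~` V); [exact: open_closedC | exact: AUclosed].
  have : (A `&` ~` V) v by rewrite -AUclosed AUA.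
  by move=> [_ /(_ Vv)].
move=> B [b Bb] [U oU BU] [C cC BC].
apply: contrapT => BA.
have [d Ad Bd] : exists2 d, A d & ~ B d.
  apply: contrapT => noD; apply: BA; apply/seteqP; split.
    by move=> x; rewrite BU; case.
  by move=> x Ax; apply: contrapT => nBx; apply: noD; exists x.
apply: (noSep U (~` C) oU (closed_openC cC)); split.
- move=> x Ax; have [Cx|nCx] := pselect (C x); last by right.
  have : B x by rewrite BC.
  by rewrite BU => -[_ Ux]; left.
- apply/seteqP; split=> // x [[Ax Ux] nCx].
  have : B x by rewrite BU.
  by rewrite BC => -[].
- by exists b; move: Bb; rewrite {1}BU.
- by exists d; split=> // Cd; apply: Bd; rewrite BC.
Qed.

Lemma dense_in_disjoint {Y D O} :
  dense_in Y D -> open O -> O `&` D = set0 -> O `&` Y = set0.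
Proof.
move=> [_ Dd] oO OD; apply/seteqP; split=> // x OYx.
by have := Dd O oO (ex_intro _ x OYx); rewrite OD => -[].
Qed.

Lemma dense_in_restrict {Y X D W} :
  X `<=` Y -> (forall O, open O -> O `&` Y !=set0 -> O `&` X !=set0) ->
  dense_in Y D -> open W -> D `<=` W -> dense_in X (X `&` W).
Proof.
move=> XY meetsX [DY Dd] oW DW; split; first by move=> x [].
move=> O oO [x [Ox Xx]].
have [e [Oe De]] := Dd O oO (ex_intro _ x (conj Ox (XY x Xx))).
have [y [[Oy Wy] Xy]] : (O `&` W) `&` X !=set0.
  by apply: meetsX; [exact: openI | exists e; split; [split; last exact: DW|exact: DY]].
by exists y.
Qed.

End OpenSeparation.

Theorem mainTheorem12 (T : topologicalType) (I : Type) (X : I -> set T) :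
  (forall a : I, dense_connected (X a)) ->
  (forall U : set T, open U -> U !=set0 ->
     U `&` (\bigcup_(a in [set: I]) X a) = set0 \/ (forall a : I, U `&` X a !=set0)) ->
  dense_connected (\bigcup_(a in [set: I]) X a).
Proof.
move=> Xdc dichotomy D Dd.
set Y := \bigcup_(a in [set: I]) X a.
have XY a : X a `<=` Y by move=> x Xx; exists a.
have meetsX O : open O -> O `&` Y !=set0 -> forall a, O `&` X a !=set0.
  move=> oO [y Oy]; have [OY0|//] := dichotomy O oO (ex_intro _ y Oy.1).
  by have : set0 y by rewrite -OY0.
apply/connected_open_separation => U V oU oV [DUV DUV0 [u [Du Uu]] [v [Dv Vv]]].
have [a _ Xau] := Dd.1 u Du.
have YUV0 : (U `&` V) `&` Y = set0.
  apply: (dense_in_disjoint Dd); first exact: openI.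
  by rewrite setIC setIA.
have Sdense : dense_in (X a) (X a `&` (U `|` V)).
  apply: (dense_in_restrict (XY a) _ Dd) => //; last exact: openU.
  by move=> O oO OY; exact: meetsX.
move: (Xdc a _ Sdense) => /connected_open_separation /(_ U V oU oV); apply; split.
- by move=> x [].
- apply/seteqP; split=> // x [[[Xx _] Ux] Vx].
  by rewrite -YUV0; split; [split | exact: XY Xx].
- have [x [Ux Xx]] := meetsX U oU (ex_intro _ u (conj Uu (Dd.1 u Du))) a.
  by exists x; split=> //; split=> //; left.
- have [x [Vx Xx]] := meetsX V oV (ex_intro _ v (conj Vv (Dd.1 v Dv))) a.
  by exists x; split=> //; split=> //; right.
Qed.
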